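(* Let $n\ge3$ be an odd integer. For $1\le r\le n-1$ let $T^r_n=\{(k,a,b)\in(\mathbb{R}\setminus C_n)\times\mathbb{R}\times\mathbb{R}: k\neq0,\ \mathrm{rank}(B^{(k,a,b)}_n)\le r,\ 4a^3+27b^2=0\}\setminus\{(k,0,0):k\in\mathbb{R}\}$. Then (a) $T^{n-1}_n=\{(k,a^{(n)}_{k,3},b^{(n)}_{k,3}): k\in\mathbb{R}\setminus C_n\}$; (b) the matrix $B^{(k,a,b)}_n$ has rank exactly $n-1$ for all but finitely many triples $(k,a,b)\in T^{n-1}_n$; (c) for each $1\le r\le n-2$, the matrix $B^{(k,a,b)}_n$ has rank $r$ for only finitely many triples $(k,a,b)\in T^{n-1}_n$.
   Context: For real $k,a,b$, the generalized $k$-FL sequence is $S^{(a,b)}_{k,0}=2b$, $S^{(a,b)}_{k,1}=bk+a$, $S^{(a,b)}_{k,m}=kS^{(a,b)}_{k,m-1}+S^{(a,b)}_{k,m-2}$. $B^{(k,a,b)}_n$ is the $n\times n$ circulant matrix whose $(i,j)$ entry is $S^{(a,b)}_{k,j-i+1}$ if $j\ge i$ and $S^{(a,b)}_{k,n+j-i+1}$ if $j<i$. Define $f_m,g_m\in\mathbb{Z}[T]$ by $f_0=0,f_1=1,g_0=2,g_1=T$, $f_m=Tf_{m-1}+f_{m-2}$, $g_m=Tg_{m-1}+g_{m-2}$; $P_n=f_{n+1}+f_n$, $Q_n=g_{n+1}+g_n$; $C_n=\{k\in\mathbb{R}: P_n(k)-1=0\text{ or }Q_n(k)-k-2=0\}$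 (for odd $n$, $0\in C_n$). For $k\notin C_n$, the singular $k$-FL pair of level $n$ of Type 3 is $a^{(n)}_{k,3}=-\frac{27(P_n(k)-1)^2}{4(Q_n(k)-k-2)^2}$, $b^{(n)}_{k,3}=\frac{27(P_n(k)-1)^3}{4(Q_n(k)-k-2)^3}$. The condition $4a^3+27b^2=0$ means the curve $y^2=x^3+ax+b$ is singular. *)

From HB Require Import structures.
From mathcomp Require Import all_boot all_order all_algebra.
From mathcomp Require Import reals.
Set Implicit Arguments. Unset Strict Implicit. Unset Printing Implicit Defensive.
Import Order.TTheory GRing.Theory Num.Theory.
Local Open Scope ring_scope.

Section Defs.
Variable R : realType.

Fixpoint lrec (k x0 x1 : R) (m : nat) : R * R :=
  match m with
  | 0%N => (x0, x1)
  | m'.+1 => let p := lrec k x0 x1 m' in (p.2, k * p.2 + p.1)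
  end.

Definition S (k a b : R) (m : nat) : R := (lrec k (2 * b) (b * k + a) m).1.

(* circulant matrix B^{(k,a,b)}_n (0-based indices, same j-i offsets) *)
Definition Bmx (n : nat) (k a b : R) : 'M[R]_n :=
  \matrix_(i < n, j < n)
     if (i <= j)%N then S k a b (j - i + 1) else S k a b (n + j - i + 1).

(* f_m(k), g_m(k) : the polynomials f_m, g_m evaluated at T = k *)
Definition fpol (k : R) (m : nat) : R := (lrec k 0 1 m).1.
Definition gpol (k : R) (m : nat) : R := (lrec k 2 k m).1.

Definition Ppol (n : nat) (k : R) : R := fpol k n.+1 + fpol k n.
Definition Qpol (n : nat) (k : R) : R := gpol k n.+1 + gpol k n.

Definition inC (n : nat) (k : R) : Prop :=
  Ppol n k - 1 = 0 \/ Qpol n k - k - 2 = 0.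

Definition a3 (n : nat) (k : R) : R :=
  - (27 * (Ppol n k - 1) ^+ 2) / (4 * (Qpol n k - k - 2) ^+ 2).
Definition b3 (n : nat) (k : R) : R :=
  (27 * (Ppol n k - 1) ^+ 3) / (4 * (Qpol n k - k - 2) ^+ 3).

Definition inT (n r : nat) (k a b : R) : Prop :=
  ~ inC n k /\ k != 0 /\ (\rank (Bmx n k a b) <= r)%N /\
  4 * a ^+ 3 + 27 * b ^+ 2 = 0 /\ ~ (a = 0 /\ b = 0).

End Defs.

(* Write B = (c_((j - i) mod n)) with c_d = S_(d+1).  Since S_(m+2) = k S_(m+1) + S_m,
   the combination col_(j+2) - k col_(j+1) - col_j of u B only retains the two entries that
   wrap around, so a left kernel vector u satisfies alpha u_(j+2) + beta u_(j+1) = 0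
   cyclically, where alpha + beta = - (a (P_n(k) - 1) + b (Q_n(k) - k - 2)).  For odd n
   the only real n-th root of unity is 1, so a nonzero kernel vector forces alpha + beta = 0;
   the kernel then consists of constant vectors unless alpha = beta = 0, which by a
   Cassini-type identity (and g_n(k) <> 0 for odd n, k <> 0) only happens for a = b = 0.
   Conversely k times the row sum of B telescopes to a (P_n(k) - 1) + b (Q_n(k) - k - 2),
   so the constant vector is in the kernel on that line.  Hence on the cusp the rank is at
   most n - 1 exactly on the line, where it equals n - 1, and intersecting the line with the
   cusp gives the Type 3 pair; the exceptional sets in (b) and (c) are empty. *)

From HB Require Import structures.
From mathcomp Require Import all_boot all_order all_algebra.
From mathcomp Require Import reals.
From mathcomp Require Import ring zify.
Import Order.TTheory GRing.Theory Num.Theory.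
Set Implicit Arguments. Unset Strict Implicit. Unset Printing Implicit Defensive.
Local Open Scope ring_scope.

Lemma nat_ind2 (P : nat -> Prop) : P 0%N -> P 1%N ->
  (forall m, P m -> P m.+1 -> P m.+2) -> forall m, P m.
Proof.
move=> P0 P1 PSS m; suff: P m /\ P m.+1 by case.
by elim: m => [|m [IHm IHSm]]; split => //; apply: PSS.
Qed.

Section Recurrences.
Variable R : realType.
Implicit Types (k a b : R) (m : nat).

Lemma fpolSS k m : fpol k m.+2 = k * fpol k m.+1 + fpol k m. Proof. by []. Qed.
Lemma gpolSS k m : gpol k m.+2 = k * gpol k m.+1 + gpol k m. Proof. by []. Qed.
Lemma SSS k a b m : S k a b m.+2 = k * S k a b m.+1 + S k a b m. Proof. by []. Qed.

Lemma gpol_fpol k m : gpol k m = 2 * fpol k m.+1 - k * fpol k m.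
Proof.
elim/nat_ind2: m => [||m IHm IHSm].
1,2: by rewrite /gpol /fpol /=; ring.
by rewrite gpolSS IHm IHSm !fpolSS; ring.
Qed.

Lemma S_gpol_fpol k a b m : S k a b m = b * gpol k m + a * fpol k m.
Proof.
elim/nat_ind2: m => [||m IHm IHSm].
1,2: by rewrite /S /gpol /fpol /=; ring.
by rewrite SSS IHm IHSm gpolSS fpolSS; ring.
Qed.

Lemma fpol_gpol_cassini k m :
  fpol k m * gpol k m.+1 - fpol k m.+1 * gpol k m = 2 * (-1) ^+ m.+1.
Proof.
elim: m => [|m IHm]; first by rewrite /fpol /gpol /=; ring.
by rewrite gpolSS fpolSS exprS mulN1r mulrN -IHm; ring.
Qed.

Lemma gpol_gt0 k m : 0 < k -> 0 < gpol k m.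
Proof.
move=> k_gt0; elim/nat_ind2: m => [||m IHm IHSm] //; rewrite gpolSS.
by rewrite addr_gt0 // mulr_gt0.
Qed.

Lemma gpolN k m : gpol (- k) m = (-1) ^+ m * gpol k m.
Proof.
elim/nat_ind2: m => [||m IHm IHSm].
1,2: by rewrite /gpol /=; ring.
by rewrite !gpolSS IHm IHSm !exprS; ring.
Qed.

Lemma gpol_odd_neq0 k m : odd m -> k != 0 -> gpol k m != 0.
Proof.
move=> m_odd; case: (ltrgtP k 0) => // [k_lt0 _|k_gt0 _]; last first.
  by rewrite gt_eqF ?gpol_gt0.
rewrite -[k]opprK gpolN -signr_odd m_odd mulN1r oppr_eq0.
by rewrite gt_eqF ?gpol_gt0 ?oppr_gt0.
Qed.

Lemma fpol0 m : fpol (0 : R) m = (odd m)%:R.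
Proof.
elim/nat_ind2: m => [||m IHm _] //.
by rewrite fpolSS mul0r add0r IHm /= negbK.
Qed.

Lemma inC0 n : odd n -> inC n (0 : R).
Proof. by move=> n_odd; left; rewrite /Ppol !fpol0 /= n_odd /=; ring. Qed.

Lemma S_telescope_PQ k a b N :
  S k a b N.+1 + S k a b N - S k a b 1 - S k a b 0 =
  a * (Ppol N k - 1) + b * (Qpol N k - k - 2).
Proof. by rewrite /Ppol /Qpol !S_gpol_fpol /gpol /fpol /=; ring. Qed.

Lemma sum_S_PQ k a b N :
  k * \sum_(d < N) S k a b d.+1 = a * (Ppol N k - 1) + b * (Qpol N k - k - 2).
Proof.
rewrite -S_telescope_PQ; elim: N => [|N IHN]; first by rewrite big_ord0; ring.
by rewrite big_ord_recr /= mulrDr IHN SSS; ring.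
Qed.

Lemma S_periodic_eq0 k a b N : odd N -> k != 0 ->
  S k a b N = S k a b 0 -> S k a b N.+1 = S k a b 1 -> a = 0 /\ b = 0.
Proof.
move=> N_odd k_neq0 SN SN1.
have e : a * fpol k N + b * (gpol k N - 2) = S k a b N - S k a b 0.
  by rewrite S_gpol_fpol [S _ _ _ 0]/S /=; ring.
have e' : a * (fpol k N.+1 - 1) + b * (gpol k N.+1 - k) = S k a b N.+1 - S k a b 1.
  by rewrite S_gpol_fpol [S _ _ _ 1]/S /=; ring.
rewrite SN SN1 !subrr in e e'.
move: e e'; set p := fpol k N; set p' := fpol k N.+1.
set q := gpol k N; set q' := gpol k N.+1 => e e'.
(* Cramer's rule: the determinant of this system is [2 * gpol k N] *)
have det : p * (q' - k) - (q - 2) * (p' - 1) = 2 * q.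
  have := fpol_gpol_cassini k N; rewrite -signr_odd /= N_odd expr0 mulr1 => cas.
  have := gpol_fpol k N; rewrite -/p -/p' -/q => qE.
  apply/eqP; rewrite -subr_eq0; apply/eqP.
  transitivity ((p * q' - p' * q - 2) - (q - (2 * p' - k * p))); first ring.
  by rewrite cas -qE !subrr.
have det_neq0 : 2 * q != 0 by rewrite mulf_neq0 ?pnatr_eq0 ?gpol_odd_neq0.
split; apply: (mulIf det_neq0); rewrite mul0r -det.
- by transitivity ((q' - k) * (a * p + b * (q - 2)) - (q - 2) * (a * (p' - 1) + b * (q' - k)));
    [ring | rewrite e e'; ring].
- by transitivity (p * (a * (p' - 1) + b * (q' - k)) - (p' - 1) * (a * p + b * (q - 2)));
    [ring | rewrite e e'; ring].
Qed.

End Recurrences.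

Lemma modnDBml (N J i : nat) : (i <= N)%N -> ((J %% N + N - i) %% N = (J + N - i) %% N)%N.
Proof. by move=> le_iN; rewrite -!addnBA // modnDml. Qed.

Lemma modn_subKr (N J d : nat) : (d < N)%N -> ((J + N - (J + N - d) %% N) %% N = d)%N.
Proof.
move=> lt_dN; have N_gt0 : (0 < N)%N by apply: leq_ltn_trans lt_dN.
have := divn_eq (J + N - d) N; have := ltn_pmod (J + N - d) N_gt0.
move: ((J + N - d) %/ N)%N ((J + N - d) %% N)%N => q r lt_rN eq_qr.
have -> : (J + N - r = q * N + d)%N by lia.
by rewrite modnMDl modn_small.
Qed.

Lemma inZp_ord n (i : 'I_n.+1) : inZp i = i.
Proof. by apply: val_inj; rewrite /= modn_small. Qed.

Lemma inZpDn n J : (inZp (J + n.+1) : 'I_n.+1) = inZp J.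
Proof. by apply: val_inj; rewrite /= modnDr. Qed.

Definition circulant (R : Type) n (c : nat -> R) : 'M[R]_n :=
  \matrix_(i, j) c ((j + n - i) %% n)%N.

Lemma Bmx_circulant (R : realType) n (k a b : R) :
  Bmx n k a b = circulant n (fun d => S k a b d.+1).
Proof.
apply/matrixP => i j; rewrite !mxE; have := ltn_ord i; have := ltn_ord j.
case: (leqP i j) => [le_ij|lt_ji] lt_jn lt_in.
  by rewrite -addnBAC // modnDr modn_small ?addn1 //; lia.
by rewrite modn_small ?addn1 1?addnC //; lia.
Qed.

Section Circulant.
Variables (R : comPzRingType) (k : R) (c : nat -> R).
Hypothesis c_rec : forall d, c d.+2 = k * c d.+1 + c d.

Lemma circulant_mulE n (u : 'rV[R]_n.+1) J :
  (u *m circulant n.+1 c) 0 (inZp J) = \sum_(d < n.+1) u 0 (inZp (J + n.+1 - d)) * c d.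
Proof.
pose h (d : 'I_n.+1) : 'I_n.+1 := inZp (J + n.+1 - d).
have hK : involutive h by move=> d; apply: val_inj; rewrite /= modn_subKr.
rewrite mxE (reindex_inj (inv_inj hK)); apply: eq_bigr => d _.
by rewrite mxE /= modnDBml ?modn_subKr // ltnW // ltn_pmod.
Qed.

Lemma circulant_rec_step n (u : 'rV[R]_n.+2) J :
  (u *m circulant n.+2 c) 0 (inZp J.+2) - k * (u *m circulant n.+2 c) 0 (inZp J.+1)
    - (u *m circulant n.+2 c) 0 (inZp J) =
  (c 0 - c n.+2) * u 0 (inZp J.+2) + (c 1 - k * c 0 - c n.+1) * u 0 (inZp J.+1).
Proof.
pose v (j : nat) : R := u 0 (inZp j).
have v_per j : v (j + n.+2)%N = v j by rewrite /v inZpDn.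
rewrite !circulant_mulE -/v.
rewrite -!(big_mkord xpredT (fun d => v (_ + n.+2 - d)%N * c d)).
rewrite [in X in X - _ - _](big_nat_recl n.+1) // [in X in X - _ - _]big_nat_recl //.
rewrite [in X in _ - k * X - _](big_nat_recl n.+1) // [in X in _ - k * X - _]big_nat_recr //.
rewrite [in X in _ - X](big_nat_recr n.+1) // [in X in _ - X]big_nat_recr //=.
set A := \sum_(0 <= i < n) _; set B := \sum_(0 <= i < n) _; set C := \sum_(0 <= i < n) _.
have -> : A = k * B + C.
  rewrite /A /B /C mulr_sumr -big_split; apply: eq_bigr => i _.
  by rewrite !addSn !subSS c_rec mulrDr mulrCA.
rewrite !subn0 (_ : J.+2 + n.+2 - 1 = J.+1 + n.+2)%N; last by lia.
rewrite (_ : J.+1 + n.+2 - n.+1 = J.+2)%N; last by lia.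
rewrite (_ : J + n.+2 - n = J.+2)%N; last by lia.
rewrite (_ : J + n.+2 - n.+1 = J.+1)%N; last by lia.
rewrite !v_per -/(v J.+1) -/(v J.+2) c_rec; ring.
Qed.

End Circulant.

Lemma periodic_rec1_eq0 (R : realFieldType) N (alpha beta : R) (v : nat -> R) :
  odd N -> (forall j, v (j + N)%N = v j) ->
  (forall j, alpha * v j.+1 + beta * v j = 0) -> alpha + beta != 0 ->
  forall j, v j = 0.
Proof.
move=> N_odd v_per v_rec ab_neq0.
have [alpha0|alpha_neq0] := eqVneq alpha 0.
  move=> j; have /eqP := v_rec j; rewrite alpha0 mul0r add0r mulf_eq0.
  by move: ab_neq0; rewrite alpha0 add0r => /negPf ->; move/eqP.
pose t := - beta / alpha.
have vE j : v j = t ^+ j * v 0.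
  elim: j => [|j IHj]; first by rewrite mul1r.
  rewrite exprS -mulrA -IHj; apply: (mulfI alpha_neq0).
  by move/eqP: (v_rec j); rewrite addr_eq0 => /eqP ->; rewrite /t; field.
suff v0 : v 0 = 0 by move=> j; rewrite vE v0 mulr0.
apply/eqP; apply: contraNT ab_neq0 => v0_neq0.
have tN : t ^+ N = 1 by apply: (mulIf v0_neq0); rewrite mul1r -vE -[N]add0n v_per.
have t_ge0 : 0 <= t by rewrite -(exprn_odd_ge0 _ N_odd) tN.
have : t = 1.
  by move/eqP: tN; rewrite pexprn_eq1 // => /orP[/eqP N0|/eqP //]; rewrite N0 in N_odd.
by rewrite /t => /(canRL (divfK alpha_neq0)); rewrite mul1r => <-; rewrite addNr.
Qed.

Section RankFromKernel.
Variables (F : fieldType) (n : nat) (A : 'M[F]_n).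

Lemma mxrank_ge_pred (v : 'rV[F]_n) :
  (forall u : 'rV_n, u *m A = 0 -> (u <= v)%MS) -> (n.-1 <= \rank A)%N.
Proof.
move=> ker_v; have : (kermx A <= v)%MS.
  by apply/row_subP => i; apply/ker_v/sub_kermxP/row_sub.
move/mxrankS; rewrite mxrank_ker; have := rank_leq_row v; have := rank_leq_col A.
lia.
Qed.

Lemma mxrank_le_pred (v : 'rV[F]_n) : v != 0 -> v *m A = 0 -> (\rank A <= n.-1)%N.
Proof.
move=> v_neq0 /sub_kermxP/mxrankS; rewrite mxrank_ker rank_rV v_neq0.
have := rank_leq_col A; lia.
Qed.

Lemma mxrank_lt_ker (rank_lt : (\rank A < n)%N) : exists2 u : 'rV_n, u *m A = 0 & u != 0.
Proof.
have /rowV0Pn[u /sub_kermxP uA0 u_neq0] : kermx A != 0.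
  by rewrite kermx_eq0 /row_free ltn_eqF.
by exists u.
Qed.

End RankFromKernel.

Section CirculantKernel.
Variables (R : realFieldType) (k : R) (c : nat -> R) (n : nat) (u : 'rV[R]_n.+2).
Hypotheses (c_rec : forall d, c d.+2 = k * c d.+1 + c d)
           (u_ker : u *m circulant n.+2 c = 0).

Lemma circulant_ker_rec j :
  (c 0 - c n.+2) * u 0 (inZp j.+2) + (c 1 - k * c 0 - c n.+1) * u 0 (inZp j.+1) = 0.
Proof. by rewrite -circulant_rec_step // u_ker !mxE; ring. Qed.

Lemma circulant_ker_eq0 : odd n -> (c 0 - c n.+2) + (c 1 - k * c 0 - c n.+1) != 0 -> u = 0.
Proof.
move=> n_odd ab_neq0.
have v0 := periodic_rec1_eq0 (alpha := c 0 - c n.+2) (beta := c 1 - k * c 0 - c n.+1)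
  (v := fun j => u 0 (inZp j.+1)) (N := n.+2).
apply/rowP => i; rewrite mxE -[i]inZp_ord -inZpDn -addSnnS v0 //= ?negbK // => j.
  by rewrite -addSn inZpDn.
exact: circulant_ker_rec j.
Qed.

Lemma circulant_ker_const :
  (c 0 - c n.+2) + (c 1 - k * c 0 - c n.+1) = 0 -> c 1 - k * c 0 - c n.+1 != 0 ->
  u = u 0 0 *: const_mx 1.
Proof.
move=> ab0 beta_neq0; pose v (j : nat) : R := u 0 (inZp j).
have alphaE : c 0 - c n.+2 = - (c 1 - k * c 0 - c n.+1) by apply/eqP; rewrite -addr_eq0 ab0.
have vS j : v j.+2 = v j.+1.
  have := circulant_ker_rec j; rewrite alphaE mulNr addrC -mulrBr => /eqP.
  by rewrite mulf_eq0 (negPf beta_neq0) subr_eq0 => /eqP.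
have v1 j : v j.+1 = v 1 by elim: j => // j <-; apply: vS.
have v0 : v 0 = v 1 by rewrite -(v1 n.+1) /v -(inZpDn _ 0).
apply/rowP => i; rewrite !mxE mulr1.
have -> : (0 : 'I_n.+2) = inZp 0 by apply: val_inj.
rewrite -[i]inZp_ord -/(v i) -/(v 0) v0.
by case: (val i) => [|j]; rewrite ?v0 ?v1.
Qed.

End CirculantKernel.

Lemma cusp_lineP (F : numFieldType) (p q a b : F) : p != 0 -> q != 0 ->
  [/\ a * p + b * q = 0, 4 * a ^+ 3 + 27 * b ^+ 2 = 0 & ~ (a = 0 /\ b = 0)] <->
  a = - (27 * p ^+ 2) / (4 * q ^+ 2) /\ b = 27 * p ^+ 3 / (4 * q ^+ 3).
Proof.
move=> p_neq0 q_neq0; have four_neq0 : 4 != 0 :> F by rewrite pnatr_eq0.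
split=> [[line cusp ab_neq0]|[-> ->]]; last first.
  split; [by field | by field |].
  case=> a0 _; move: a0; apply/eqP.
  by rewrite mulf_neq0 ?oppr_eq0 ?invr_eq0 ?mulf_neq0 ?expf_neq0 ?pnatr_eq0.
have apE : a * p = - (b * q) by apply/eqP; rewrite -addr_eq0 line.
have b_neq0 : b != 0.
  apply/eqP => b0; apply: ab_neq0; split=> //; apply/eqP.
  by move: apE; rewrite b0 mul0r oppr0 => /eqP; rewrite mulf_eq0 (negPf p_neq0) orbF.
(* multiplying the cusp equation by p^3 and substituting a p = - b q *)
have : b ^+ 2 * (27 * p ^+ 3 - 4 * b * q ^+ 3) = 0.
  by rewrite -[RHS](mulr0 (p ^+ 3)) -cusp; transitivity (4 * (a * p) ^+ 3 + 27 * b ^+ 2 * p ^+ 3);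
    [rewrite apE | ]; ring.
move/eqP; rewrite mulf_eq0 expf_eq0 (negPf b_neq0) andbF /= subr_eq0 => /eqP bE.
have bE' : b = 27 * p ^+ 3 / (4 * q ^+ 3) by rewrite bE; field.
by split=> //; apply: (mulIf p_neq0); rewrite apE bE'; field.
Qed.

Section FLMatrix.
Variables (R : realType) (k a b : R).

Lemma S_wrap_PQ N :
  (S k a b 1 - S k a b N.+1) + (S k a b 2 - k * S k a b 1 - S k a b N) =
  - (a * (Ppol N k - 1) + b * (Qpol N k - k - 2)).
Proof. by rewrite -S_telescope_PQ SSS; ring. Qed.

Let S_rec : forall d, S k a b d.+3 = k * S k a b d.+2 + S k a b d.+1.
Proof. by []. Qed.

Lemma Bmx_rank_lt_PQ n : odd n -> (\rank (Bmx n.+2 k a b) < n.+2)%N ->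
  a * (Ppol n.+2 k - 1) + b * (Qpol n.+2 k - k - 2) = 0.
Proof.
move=> n_odd /mxrank_lt_ker[u]; rewrite Bmx_circulant => u_ker u_neq0.
apply/eqP; apply: contraNT u_neq0 => PQ_neq0; apply/eqP.
by apply: (circulant_ker_eq0 S_rec u_ker n_odd); rewrite S_wrap_PQ oppr_eq0.
Qed.

Lemma Bmx_rank_le n : k != 0 -> a * (Ppol n.+2 k - 1) + b * (Qpol n.+2 k - k - 2) = 0 ->
  (\rank (Bmx n.+2 k a b) <= n.+1)%N.
Proof.
move=> k_neq0 PQ0; apply: (mxrank_le_pred (v := const_mx 1)).
  by apply/eqP => /rowP/(_ 0); rewrite !mxE; apply/eqP/oner_neq0.
apply/rowP => j; rewrite -[j]inZp_ord Bmx_circulant circulant_mulE !mxE.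
under eq_bigr do rewrite mxE mul1r.
by apply: (mulfI k_neq0); rewrite sum_S_PQ PQ0 mulr0.
Qed.

Lemma Bmx_rank_ge n : odd n -> k != 0 -> ~ (a = 0 /\ b = 0) ->
  a * (Ppol n.+2 k - 1) + b * (Qpol n.+2 k - k - 2) = 0 ->
  (n.+1 <= \rank (Bmx n.+2 k a b))%N.
Proof.
move=> n_odd k_neq0 ab_neq0 PQ0.
apply: (mxrank_ge_pred (A := Bmx n.+2 k a b) (v := const_mx 1)) => u.
have wrap0 := S_wrap_PQ n.+2; rewrite PQ0 oppr0 in wrap0.
rewrite Bmx_circulant => u_ker; rewrite (circulant_ker_const S_rec u_ker) ?scalemx_sub //.
apply/eqP => beta0; apply: ab_neq0; apply: (S_periodic_eq0 (N := n.+2) _ k_neq0).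
- by rewrite /= negbK.
- by apply/esym/subr0_eq; rewrite -beta0 (SSS k a b 0); ring.
- by apply/esym/subr0_eq; rewrite -[LHS]addr0 -{1}beta0; exact: wrap0.
Qed.

End FLMatrix.

Lemma notinC_PQ (R : realType) n (k : R) :
  ~ inC n k -> Ppol n k - 1 != 0 /\ Qpol n k - k - 2 != 0.
Proof. by move=> notC; split; apply/eqP => PQ0; apply: notC; [left | right]. Qed.

Lemma inT_PQ_rank (R : realType) n (k a b : R) : odd n -> inT n.+2 n.+1 k a b ->
  a * (Ppol n.+2 k - 1) + b * (Qpol n.+2 k - k - 2) = 0 /\ \rank (Bmx n.+2 k a b) = n.+1.
Proof.
move=> n_odd [_ [k_neq0 [rank_le [_ ab_neq0]]]].
have PQ0 := Bmx_rank_lt_PQ n_odd rank_le.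
by split=> //; apply/eqP; rewrite eqn_leq rank_le Bmx_rank_ge.
Qed.

Theorem theorem4p13 (R : realType) (n : nat) :
  odd n -> (3 <= n)%N ->
  (* (a) *)
  (forall k a b : R, inT n n.-1 k a b <->
     exists k' : R, ~ inC n k' /\ (k, a, b) = (k', a3 n k', b3 n k'))
  (* (b) *)
  /\ (exists s : seq (R * R * R), forall k a b : R,
        inT n n.-1 k a b -> \rank (Bmx n k a b) <> n.-1 -> (k, a, b) \in s)
  (* (c) *)
  /\ (forall r : nat, (1 <= r)%N -> (r <= n - 2)%N ->
        exists s : seq (R * R * R), forall k a b : R,
          inT n n.-1 k a b -> \rank (Bmx n k a b) = r -> (k, a, b) \in s).
Proof.
case: n => [|[|n]] // n2_odd _; have /negPn n_odd := n2_odd.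
split; [|split].
- move=> k a b; split=> [T|[k' [notC [-> -> ->]]]].
    have [PQ0 _] := inT_PQ_rank n_odd T; case: T => [notC [_ [_ [cusp ab_neq0]]]].
    have [p_neq0 q_neq0] := notinC_PQ notC.
    have [-> ->] := (cusp_lineP _ _ p_neq0 q_neq0).1 (And3 PQ0 cusp ab_neq0).
    by exists k.
  have [p_neq0 q_neq0] := notinC_PQ notC.
  have k'_neq0 : k' != 0 by apply/eqP => k'0; apply: notC; rewrite k'0; exact: inC0.
  have [PQ0 cusp ab_neq0] := (cusp_lineP _ _ p_neq0 q_neq0).2 (conj erefl erefl).
  by do ![split=> //]; apply: Bmx_rank_le.
- by exists [::] => k a b /(inT_PQ_rank n_odd)[_ ->].
- move=> r _ r_le; exists [::] => k a b /(inT_PQ_rank n_odd)[_ ->] rE.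
  by exfalso; lia.
Qed.
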